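(* Let $n>1$, $m\ge1$, let $P$ be a pivot path of $v\in Z_{n,m}$ and let $I=[p_1+1,p_2]$ be a $P$-interval. (1) Assume $p_2=m+1$ and $P$ shifts left in $I$. If $\sum_{i=j}^{m+1}v_i\geq0$ for every $j\in I$, then no step of $P$ is a left shift at $m$ applied to a vertex whose entry $m+1$ equals $0$. (2) Assume $p_1=-1$ and $P$ shifts right in $I$. If $\sum_{i=0}^{j}v_i\geq0$ for every $j\in I$, then no step of $P$ is a right shift at $0$ applied to a vertex whose entry $0$ equals $0$.
   Context: Elements of $\mathbb{Z}_n$ are identified with representatives in $\{0,\dots,n-1\}$ (so $v_0,v_{m+1}$ are such integers in sums). $Z_{n,m}$ has vertices $u=(u_0,\dots,u_{m+1})\in\mathbb{Z}_n\times\{-1,0,1\}^m\times\mathbb{Z}_n$ with $\sum u_i\equiv0\pmod n$. A step from $v$ to $u$ is a left shift at $i$ ($0\le i\le m$) if $u_j=v_j$ for $j\notin\{i,i+1\}$, $u_i=v_i+1$, $u_{i+1}=v_{i+1}-1$, and a right shift at $i$ if $u_i=v_i-1$, $u_{i+1}=v_{i+1}+1$ (arithmetic in coordinates $0,m+1$ in $\mathbb{Z}_n$); vertices are adjacent iff related by such a shift. For a path $P$ from $v$ to the all-zero vertex $0$: $0\le p\le m$ is an inner wall if no step is a shift at $p$; $-1$ is a wall if no step is a left shift at $0$; $m+1$ is a wall if no step is a right shift at $m$. A $p$-pivot path of $v$ is a shortest path from $v$ to $0$ among those having $p$ as a wall; a pivot path is a $p$-pivot path for some $p$. If $p_1<\dots<p_t$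 are the inner walls of $P$, $p_0=-1$, $p_{t+1}=m+1$, the $P$-intervals are $[p_k+1,p_{k+1}]$. For a pivot path, all steps that are shifts at $j$ with $[j,j+1]\subseteq I$ go in one direction; $P$ shifts left (right) in $I$ accordingly. *)

From HB Require Import structures.
From mathcomp Require Import all_boot all_order all_algebra.
Set Implicit Arguments. Unset Strict Implicit. Unset Printing Implicit Defensive.
Import Order.TTheory GRing.Theory Num.Theory.
Local Open Scope ring_scope.

(* A vertex u = (u_0,...,u_{m+1}) of Z_{n,m} is a sequence of m+2 integers;
   u_0, u_{m+1} are representatives in {0,...,n-1} of elements of Z_n,
   the middle entries lie in {-1,0,1}, and the sum is 0 mod n. *)
Definition vertex (n m : nat) (u : seq int) : Prop :=
  [/\ size u = m.+2,
      0 <= nth 0 u 0 < n%:Z,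
      0 <= nth 0 u m.+1 < n%:Z,
      (forall k : nat, (0 < k <= m)%N -> nth 0 u k \in [:: -1; 0; 1]) &
      (n%:Z %| \sum_(i <- u) i)%Z].

Definition zero_vertex (m : nat) : seq int := nseq m.+2 0.

Inductive dir := Lsh | Rsh.
Definition dir_eqb (a b : dir) : bool :=
  match a, b with Lsh, Lsh | Rsh, Rsh => true | _, _ => false end.
Lemma dir_eqP : Equality.axiom dir_eqb.
Proof. by case; case; constructor. Qed.
HB.instance Definition _ := hasDecEq.Build dir dir_eqP.

Definition step := (dir * nat)%type.

(* update coordinate k (value x) by c; coordinates 0 and m+1 live in Z_n *)
Definition upd (n m k : nat) (x c : int) : int :=
  if c == 0 then x
  else if (k == 0)%N || (k == m.+1)%N then ((x + c) %% n%:Z)%Z else x + c.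

Definition apply_step (n m : nat) (st : step) (u : seq int) : seq int :=
  let e : int := if st.1 is Lsh then 1 else -1 in
  [seq upd n m k (nth 0 u k)
       (if k == st.2 then e else if k == st.2.+1 then - e else 0)
  | k <- iota 0 m.+2].

Definition walk (n m : nat) (u : seq int) (t : seq step) : seq int :=
  foldl (fun w st => apply_step n m st w) u t.

Definition is_path (n m : nat) (v : seq int) (s : seq step) : Prop :=
  [/\ (forall st, st \in s -> (st.2 <= m)%N),
      (forall k : nat, (k <= size s)%N -> vertex n m (walk n m v (take k s))) &
      walk n m v s = zero_vertex m].

Definition inner_wall (m : nat) (s : seq step) (p : int) : Prop :=
  0 <= p <= m%:Z /\ (forall st, st \in s -> st.2%:Z != p).

Definition is_wall (m : nat) (s : seq step) (p : int) : Prop :=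
  if p == -1 then (forall st, st \in s -> st != (Lsh, 0%N))
  else if p == (m.+1)%:Z then (forall st, st \in s -> st != (Rsh, m))
  else inner_wall m s p.

Definition pivot_path_at (n m : nat) (v : seq int) (s : seq step) (p : int) : Prop :=
  [/\ -1 <= p <= (m.+1)%:Z, is_path n m v s, is_wall m s p &
      forall s', is_path n m v s' -> is_wall m s' p -> (size s <= size s')%N].

Definition pivot_path (n m : nat) (v : seq int) (s : seq step) : Prop :=
  exists p : int, pivot_path_at n m v s p.

Definition P_interval (m : nat) (s : seq step) (a b : int) : Prop :=
  [/\ a = -1 \/ inner_wall m s a,
      b = (m.+1)%:Z \/ inner_wall m s b,
      a < b &
      forall q : int, a < q < b -> ~ inner_wall m s q].

Definition shifts_in (d : dir) (s : seq step) (a b : int) : Prop :=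
  forall st, st \in s -> a + 1 <= st.2%:Z -> st.2.+1%:Z <= b -> st.1 = d.

Definition step_applied_to (n m : nat) (v : seq int) (s : seq step)
  (st : step) (u : seq int) : Prop :=
  exists k : nat, [/\ (k < size s)%N, nth (Lsh, 0%N) s k = st &
                      walk n m v (take k s) = u].

(* If p1 is an inner wall a, the suffix sum u_(a+1) + ... + u_(m+1) never
   decreases along P: shifts left of a do not touch it, and a left shift right of a
   preserves it, except that a left shift at m on a vertex with u_(m+1) = 0 wraps that
   entry to n - 1 and raises the sum by n.  As the sum goes from a nonnegative value to
   0, no such step occurs.  If p1 = -1, P consists of left shifts and is a shortest path
   without right shifts at m.  The sum over j = 1..m+1 of the suffix sums from j drops by
   exactly one at each non-wrapping left shift and rises by n(m+1) - 1 at a wrapping one,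
   while, when all these suffix sums are nonnegative, a greedy left-shift path as long as
   this potential leads from v to 0; so a wrap would make P too long.
   Part (2) is part (1) for the reversed vertex and path: reversing the coordinates turns
   a right shift at i into a left shift at m - i and prefix sums into suffix sums. *)

From mathcomp Require Import all_boot all_order all_algebra.
From mathcomp Require Import zify ring.
Import Order.TTheory GRing.Theory Num.Theory.
Set Implicit Arguments. Unset Strict Implicit. Unset Printing Implicit Defensive.
Local Open Scope ring_scope.

Definition shift_sign (d : dir) : int := if d is Lsh then 1 else -1.

Lemma size_apply_step n m st u : size (apply_step n m st u) = m.+2.
Proof. by rewrite /apply_step size_map size_iota. Qed.

Lemma nth_apply_step n m d i u k : (k < m.+2)%N ->
  nth 0 (apply_step n m (d, i) u) k =
  upd n m k (nth 0 u k) (if k == i then shift_sign d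
                         else if k == i.+1 then - shift_sign d else 0).
Proof. by move=> hk; rewrite /apply_step (nth_map 0%N) ?size_iota // nth_iota. Qed.

Lemma nth_apply_step_src n m d i u : (i <= m)%N ->
  nth 0 (apply_step n m (d, i) u) i = upd n m i (nth 0 u i) (shift_sign d).
Proof. by move=> him; rewrite nth_apply_step ?eqxx //; lia. Qed.

Lemma nth_apply_step_dst n m d i u : (i <= m)%N ->
  nth 0 (apply_step n m (d, i) u) i.+1 = upd n m i.+1 (nth 0 u i.+1) (- shift_sign d).
Proof. by move=> him; rewrite nth_apply_step ?eqxx ?(gtn_eqF (ltnSn i)) //; lia. Qed.

Lemma nth_apply_step_other n m d i u k : size u = m.+2 -> k != i -> k != i.+1 ->
  nth 0 (apply_step n m (d, i) u) k = nth 0 u k.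
Proof.
move=> hs /negbTE hki /negbTE hki1; case: (ltnP k m.+2) => hk.
  by rewrite nth_apply_step // hki hki1 /upd eqxx.
by rewrite !nth_default ?size_apply_step ?hs.
Qed.

Lemma sum_nat_indicator (a b i : nat) (x : int) :
  \sum_(a <= k < b) (if k == i then x else 0) = if (a <= i < b)%N then x else 0.
Proof.
elim: b => [|b IH]; first by rewrite big_geq // ltn0 andbF.
case: (leqP a b) => hab; last by rewrite big_geq //; case: ifP => // /andP[]; lia.
rewrite big_nat_recr //= IH; case: (eqVneq b i) => [<-|hbi].
  by rewrite ltnn andbF add0r hab ltnSn.
by rewrite addr0; congr (if _ then _ else _); apply/idP/idP; lia.
Qed.

Lemma sum_nat_apply_step n m d i u a b : size u = m.+2 ->
  \sum_(a <= k < b) nth 0 (apply_step n m (d, i) u) k = \sum_(a <= k < b) nth 0 u k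
    + (if (a <= i < b)%N then nth 0 (apply_step n m (d, i) u) i - nth 0 u i else 0)
    + (if (a <= i.+1 < b)%N then nth 0 (apply_step n m (d, i) u) i.+1 - nth 0 u i.+1
       else 0).
Proof.
move=> hs; rewrite -!sum_nat_indicator -!big_split /=; apply: eq_bigr => k _.
case: (eqVneq k i) => [->|hki]; first by rewrite (ltn_eqF (ltnSn i)); ring.
case: (eqVneq k i.+1) => [->|hki1]; first by ring.
by rewrite nth_apply_step_other // !addr0.
Qed.

Lemma sum_nth (u : seq int) : \sum_(x <- u) x = \sum_(0 <= k < size u) nth 0 u k.
Proof. by rewrite (big_nth 0). Qed.

Lemma upd_inner n m k x c : k != 0%N -> k != m.+1 -> upd n m k x c = x + c.
Proof.
by move=> /negbTE hk0 /negbTE hkm; rewrite /upd hk0 hkm; case: eqP => // ->; rewrite addr0.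
Qed.

Lemma upd_endpoint_bound n m k x c : (0 < n)%N -> (k == 0%N) || (k == m.+1) ->
  0 <= x < n%:Z -> 0 <= upd n m k x c < n%:Z.
Proof.
move=> hn hk hx; rewrite /upd hk; case: ifP => // _.
by rewrite modz_ge0 ?ltz_pmod //; lia.
Qed.

Lemma upd_congr n m k x c : (n%:Z %| upd n m k x c - x - c)%Z.
Proof.
rewrite /upd; case: eqP => [->|_]; first by rewrite subrr subr0 dvdz0.
case: ifP => _; last by rewrite (_ : x + c - x - c = 0) ?dvdz0 //; ring.
have := divz_eq (x + c) n%:Z; set q := (_ %/ _)%Z; set r := (_ %% _)%Z => hqr.
rewrite (_ : r - x - c = - q * n%:Z) ?dvdz_mull //.
by rewrite (_ : r = x + c - q * n%:Z); [ring | rewrite hqr; ring].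
Qed.

Lemma vertex_size n m u : vertex n m u -> size u = m.+2.
Proof. by case. Qed.

Lemma vertex_apply_step n m d i u : (0 < n)%N -> vertex n m u -> (i <= m)%N ->
  (forall k, (0 < k <= m)%N -> nth 0 (apply_step n m (d, i) u) k \in [:: -1; 0; 1]) ->
  vertex n m (apply_step n m (d, i) u).
Proof.
move=> hn [hs h0 hm1 _ hdv] him hmid; split => //; rewrite ?size_apply_step //.
- by rewrite nth_apply_step // upd_endpoint_bound.
- by rewrite nth_apply_step // upd_endpoint_bound // eqxx orbT.
rewrite sum_nth size_apply_step sum_nat_apply_step // -hs -sum_nth hs.
rewrite ifT ?ifT ?nth_apply_step_src ?nth_apply_step_dst //; try lia.
rewrite -addrA; apply: rpredD => //.
(* Each shifted coordinate moves by the shift sign modulo n, and the two signs cancel. *)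
rewrite (_ : _ + _ = (upd n m i (nth 0 u i) (shift_sign d) - nth 0 u i - shift_sign d)
                   + (upd n m i.+1 (nth 0 u i.+1) (- shift_sign d) - nth 0 u i.+1
                      - - shift_sign d)); last by ring.
by rewrite rpredD ?upd_congr.
Qed.

Lemma modz_pred (n : nat) (x : int) : 0 <= x < n%:Z ->
  ((x - 1) %% n%:Z)%Z = x - 1 + (if x == 0 then n%:Z else 0).
Proof.
move=> hx; case: eqP => [->|hx0]; last by rewrite addr0 modz_small //; lia.
by rewrite -(modzDl (-1) n%:Z) modz_small; lia.
Qed.

Definition Lsh_wraps m i (u : seq int) : bool := (i == m) && (nth 0 u m.+1 == 0).

Lemma nth_Lsh_src n m i u : (0 < i <= m)%N ->
  nth 0 (apply_step n m (Lsh, i) u) i = nth 0 u i + 1.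
Proof. by move=> hi; rewrite nth_apply_step_src ?upd_inner //; lia. Qed.

Lemma nth_Lsh_dst n m i u : vertex n m u -> (i <= m)%N ->
  nth 0 (apply_step n m (Lsh, i) u) i.+1
  = nth 0 u i.+1 - 1 + (if Lsh_wraps m i u then n%:Z else 0).
Proof.
move=> [_ _ hm1 _ _] him; rewrite nth_apply_step_dst // /Lsh_wraps.
case: (eqVneq i m) => [->|him'] /=; last by rewrite upd_inner ?addr0 //; lia.
by rewrite /upd eqxx orbT modz_pred.
Qed.

Definition suffix_sum m j (u : seq int) : int := \sum_(j <= k < m.+2) nth 0 u k.

Lemma suffix_sum_Lsh n m i j u : vertex n m u -> (i <= m)%N -> (0 < j <= m.+1)%N ->
  suffix_sum m j (apply_step n m (Lsh, i) u)
  = suffix_sum m j u - (if j == i.+1 then 1 else 0) + (if Lsh_wraps m i u then n%:Z else 0).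
Proof.
move=> hv him hj.
have wraps_m : Lsh_wraps m i u -> i = m by case/andP => /eqP.
rewrite /suffix_sum sum_nat_apply_step ?nth_Lsh_dst //; last exact: vertex_size hv.
case: (leqP j i) => hji; first rewrite nth_Lsh_src; try lia.
all: move: wraps_m; case: (Lsh_wraps m i u) => /=; repeat case: ifP; lia.
Qed.

Lemma suffix_sum_low n m d i j u : size u = m.+2 -> (i.+1 < j)%N ->
  suffix_sum m j (apply_step n m (d, i) u) = suffix_sum m j u.
Proof.
move=> hs hij; rewrite /suffix_sum sum_nat_apply_step // !ifF ?addr0 //; lia.
Qed.

Lemma suffix_sum_recl m j (u : seq int) : (j < m.+2)%N ->
  suffix_sum m j u = nth 0 u j + suffix_sum m j.+1 u.
Proof. by move=> hj; rewrite /suffix_sum big_ltn. Qed.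

Lemma suffix_sum_out m u : suffix_sum m m.+2 u = 0.
Proof. by rewrite /suffix_sum big_geq. Qed.

Lemma suffix_sum_zero m j : suffix_sum m j (zero_vertex m) = 0.
Proof. by rewrite /suffix_sum big1 // => k _; rewrite nth_nseq if_same. Qed.

Definition suffix_sums_ge0 m (u : seq int) : Prop :=
  forall j, (0 < j <= m.+1)%N -> 0 <= suffix_sum m j u.

Definition suffix_potential m (u : seq int) : int := \sum_(1 <= j < m.+2) suffix_sum m j u.

Lemma suffix_potential_Lsh n m i u : vertex n m u -> (i <= m)%N ->
  suffix_potential m (apply_step n m (Lsh, i) u)
  = suffix_potential m u - 1 + (if Lsh_wraps m i u then n%:Z *+ m.+1 else 0).
Proof.
move=> hv him; rewrite /suffix_potential (eq_big_nat _ _ (F2 := fun j =>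
  suffix_sum m j u - (if j == i.+1 then 1 else 0) + (if Lsh_wraps m i u then n%:Z else 0))).
  rewrite big_split sumrB /= sum_nat_indicator sumr_const_nat ifT; last lia.
  by case: (Lsh_wraps m i u); rewrite ?mul0rn.
by move=> j hj; rewrite suffix_sum_Lsh.
Qed.

Lemma suffix_potential_ge0 m u : suffix_sums_ge0 m u -> 0 <= suffix_potential m u.
Proof.
move=> hge; rewrite /suffix_potential big_seq; apply: sumr_ge0 => j.
by rewrite mem_index_iota => hj; apply: hge.
Qed.

Lemma suffix_potential_zero m : suffix_potential m (zero_vertex m) = 0.
Proof. by rewrite /suffix_potential big1 // => j _; rewrite suffix_sum_zero. Qed.

Lemma zero_vertex_of_suffix_sums n m u : vertex n m u ->
  (forall j, (0 < j <= m.+1)%N -> suffix_sum m j u = 0) -> u = zero_vertex m.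
Proof.
move=> hv hS; have hs := vertex_size hv.
have hmid k : (0 < k <= m.+1)%N -> nth 0 u k = 0.
  move=> hk; have := @suffix_sum_recl m k u ltac:(lia).
  case: (eqVneq k m.+1) => [->|hkm]; first by rewrite suffix_sum_out hS //; lia.
  by rewrite !hS //; lia.
have h0 : nth 0 u 0 = 0.
  case: hv => _ h0 _ _; rewrite sum_nth hs -/(suffix_sum m 0 u) suffix_sum_recl //.
  by rewrite hS // addr0 => /dvdz_mod0P; rewrite modz_small.
apply: (@eq_from_nth _ 0); first by rewrite size_nseq.
move=> k; rewrite hs => hk; rewrite nth_nseq hk.
by case: k hk => [|k] hk //; apply: hmid.
Qed.

Definition safe_Lsh m (u : seq int) i : bool :=
  [&& (i <= m)%N, 0 < suffix_sum m i.+1 u, 0 < nth 0 u i.+1 & (i == 0%N) || (nth 0 u i <= 0)].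

Lemma safe_Lsh_below m (u : seq int) k :
  (0 < k <= m.+1)%N -> 0 < nth 0 u k -> 0 < suffix_sum m k u -> exists i, safe_Lsh m u i.
Proof.
elim: k => [|k IH] hk huk hSk; first lia.
case: (eqVneq k 0%N) => [k0|k0].
  by subst k; exists 0%N; apply/and4P; split.
have [huk'|huk'] := lerP (nth 0 u k) 0.
  by exists k; apply/and4P; split; rewrite ?huk' ?orbT //; lia.
apply: IH => //; first lia.
by rewrite suffix_sum_recl; lia.
Qed.

Lemma exists_safe_Lsh n m u : vertex n m u -> suffix_sums_ge0 m u -> u != zero_vertex m ->
  exists i, safe_Lsh m u i.
Proof.
move=> hv hge hnz.
pose P j := (0 < j <= m.+1)%N && (0 < suffix_sum m j u).
have exP : exists j, P j.
  case: (boolP (has P (iota 1 m.+1))) => [/hasP[j _ hj]|/hasPn hnone]; first by exists j.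
  case/negP: hnz; apply/eqP; apply: (zero_vertex_of_suffix_sums hv) => j hj.
  have := hnone j; rewrite mem_iota /P hj /=; have := hge j hj; lia.
have ubP j : P j -> (j <= m.+1)%N by case/andP => /andP[].
case: (ex_maxnP exP ubP) => j /andP[hj hSj] hmax.
have hSj1 : suffix_sum m j.+1 u = 0.
  case: (eqVneq j m.+1) => [->|hjm]; first exact: suffix_sum_out.
  have := hge j.+1 ltac:(lia); have := hmax j.+1; rewrite /P; lia.
apply: (safe_Lsh_below hj) => //.
by move: hSj; rewrite suffix_sum_recl ?hSj1 ?addr0 //; lia.
Qed.

Lemma vertex_inner_bound n m (u : seq int) k :
  vertex n m u -> (0 < k <= m)%N -> -1 <= nth 0 u k <= 1.
Proof. by case=> _ _ _ hmid _ /hmid; rewrite !inE; lia. Qed.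

Lemma safe_Lsh_step n m u i : (0 < n)%N -> vertex n m u -> suffix_sums_ge0 m u ->
  safe_Lsh m u i ->
  [/\ ~~ Lsh_wraps m i u, vertex n m (apply_step n m (Lsh, i) u)
    & suffix_sums_ge0 m (apply_step n m (Lsh, i) u)].
Proof.
move=> hn hv hge /and4P[him hS hui hi0].
have nowrap : ~~ Lsh_wraps m i u by apply/andP => -[/eqP hi /eqP]; rewrite -hi; lia.
split => //.
  apply: vertex_apply_step => // k hk; rewrite !inE.
  have := vertex_inner_bound hv hk.
  case: (eqVneq k i) => [eki|hki]; first by subst k; rewrite nth_Lsh_src; lia.
  case: (eqVneq k i.+1) => [eki1|hki1].
    by subst k; rewrite nth_Lsh_dst // (negbTE nowrap); lia.
  by rewrite nth_apply_step_other ?(vertex_size hv) //; lia.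
move=> j hj; rewrite suffix_sum_Lsh // (negbTE nowrap) addr0.
by have := hge j hj; case: eqP => [->|]; lia.
Qed.

Lemma Lsh_descent n m u : (0 < n)%N -> vertex n m u -> suffix_sums_ge0 m u ->
  u != zero_vertex m -> exists i, [/\ (i <= m)%N, vertex n m (apply_step n m (Lsh, i) u),
    suffix_sums_ge0 m (apply_step n m (Lsh, i) u)
    & suffix_potential m (apply_step n m (Lsh, i) u) = suffix_potential m u - 1].
Proof.
move=> hn hv hge hnz; have [i hi] := exists_safe_Lsh hv hge hnz.
have [nowrap hv' hge'] := safe_Lsh_step hn hv hge hi.
have him : (i <= m)%N by case/and4P: hi.
by exists i; split; rewrite // suffix_potential_Lsh // (negbTE nowrap) addr0.
Qed.

Lemma is_path_nil n m (u : seq int) : vertex n m u -> u = zero_vertex m -> is_path n m u [::].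
Proof. by move=> hv hz; split => // k; rewrite leqn0 => /eqP ->. Qed.

Lemma is_path_cons n m (u : seq int) st t : vertex n m u -> (st.2 <= m)%N ->
  is_path n m (apply_step n m st u) t -> is_path n m u (st :: t).
Proof.
move=> hv hst [hle hvert hend]; split => //.
  by move=> st'; rewrite inE => /orP[/eqP -> // | /hle].
by case=> [|k] //= hk; apply: hvert.
Qed.

Lemma path_step_le n m v s : is_path n m v s -> forall st, st \in s -> (st.2 <= m)%N.
Proof. by case. Qed.

Lemma is_path_vertex n m v s : is_path n m v s -> vertex n m v.
Proof. by case=> _ /(_ 0%N isT); rewrite take0. Qed.

Lemma path_of_potential n m d (Inv : seq int -> Prop) (Psi : seq int -> int) :
  (forall u, vertex n m u -> Inv u -> 0 <= Psi u) ->
  (forall u, vertex n m u -> Inv u -> u != zero_vertex m ->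
     exists i, [/\ (i <= m)%N, vertex n m (apply_step n m (d, i) u),
                   Inv (apply_step n m (d, i) u)
                 & Psi (apply_step n m (d, i) u) = Psi u - 1]) ->
  forall u, vertex n m u -> Inv u ->
  exists t, [/\ is_path n m u t, (forall st, st \in t -> st.1 = d) & (size t)%:Z <= Psi u].
Proof.
move=> Psi_ge0 descent u hv hI.
have [N hN] : exists N : nat, Psi u < N%:Z by exists `|Psi u|.+1%N; lia.
elim: N u hv hI hN => [|N IH] u hv hI hN; first by have := Psi_ge0 u hv hI; lia.
have [hz|hnz] := eqVneq u (zero_vertex m).
  by exists [::]; split; rewrite ?Psi_ge0 ?is_path_nil.
have [i [him hv' hI' hPsi]] := descent u hv hI hnz.
have [|t [ht htd hts]] := IH _ hv' hI'; first by lia.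
exists ((d, i) :: t); split; first exact: is_path_cons.
  by move=> st; rewrite inE => /orP[/eqP -> // | /htd].
by rewrite /=; lia.
Qed.

Lemma telescope_lower_bound (f : nat -> int) (N k0 : nat) (c D : int) :
  (forall k, (k < N)%N -> f k - c <= f k.+1) -> (k0 < N)%N -> f k0 - c + D <= f k0.+1 ->
  f 0%N - c * N%:Z + D <= f N.
Proof.
move=> hstep hk0 hD.
have : \sum_(0 <= k < N) (if k == k0 then D else 0) <= \sum_(0 <= k < N) (f k.+1 - f k + c).
  rewrite !big_nat; apply: ler_sum => k /= hk.
  by case: eqP => [->|_]; [lia | have := hstep k hk; lia].
rewrite sum_nat_indicator ifT // big_split /= telescope_sumr // sumr_const_nat subn0.
lia.
Qed.

Lemma step_applied_toP n m v s st (u : seq int) : is_path n m v s ->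
  step_applied_to n m v s st u -> vertex n m u /\ st \in s.
Proof. by move=> [_ hvert _] [k [hk <- <-]]; split; [apply: hvert; lia | apply: mem_nth]. Qed.

Lemma path_potential_bound n m v s (F : seq int -> int) (c D : int) st0 u0 :
  is_path n m v s ->
  (forall u st, vertex n m u -> st \in s -> F u - c <= F (apply_step n m st u)) ->
  step_applied_to n m v s st0 u0 -> F u0 - c + D <= F (apply_step n m st0 u0) ->
  F v - c * (size s)%:Z + D <= F (zero_vertex m).
Proof.
move=> [_ hvert hend] hF [k0 [hk0 hst0 hu0]] hD.
have walkS k : (k < size s)%N -> walk n m v (take k.+1 s)
                 = apply_step n m (nth (Lsh, 0%N) s k) (walk n m v (take k s)).
  by move=> hk; rewrite (take_nth (Lsh, 0%N) hk) /walk foldl_rcons.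
have := @telescope_lower_bound (fun k => F (walk n m v (take k s))) (size s) k0 c D.
rewrite /= take0 take_size hend; apply => //; last by rewrite walkS // hst0 hu0.
by move=> k hk; rewrite walkS //; apply: hF; [apply: hvert; lia | apply: mem_nth].
Qed.

Lemma no_Lsh_wrap_beyond_wall n m v s (a : nat) : (0 < n)%N -> is_path n m v s ->
  (forall st, st \in s -> st.2 != a) -> (forall st, st \in s -> (a < st.2)%N -> st.1 = Lsh) ->
  (a <= m)%N -> 0 <= suffix_sum m a.+1 v ->
  forall u, step_applied_to n m v s (Lsh, m) u -> nth 0 u m.+1 != 0.
Proof.
move=> hn hp hwall hL ham hv u hu; apply/negP => /eqP hz.
have [hvu hmem] := step_applied_toP hp hu.
have ha : (a < m)%N by have := hwall _ hmem; rewrite /=; lia.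
have step_bound w st : vertex n m w -> st \in s ->
    suffix_sum m a.+1 w - 0 <= suffix_sum m a.+1 (apply_step n m st w).
  case: st => d i hw hst; have /= hi := hwall _ hst; have /= him := path_step_le hp hst.
  have [hai|hia] := ltnP a i; last by rewrite (suffix_sum_low _ _ (vertex_size hw)); lia.
  by have /= -> := hL _ hst hai; rewrite suffix_sum_Lsh //; do ?case: ifP; lia.
have wrap_bound : suffix_sum m a.+1 u - 0 + n%:Z <= suffix_sum m a.+1 (apply_step n m (Lsh, m) u).
  by rewrite suffix_sum_Lsh // /Lsh_wraps hz !eqxx /=; do ?case: ifP; lia.
have := path_potential_bound hp step_bound hu wrap_bound.
by rewrite suffix_sum_zero; lia.
Qed.

Lemma no_Lsh_wrap_on_shortest_left_path n m v s : (0 < n)%N -> vertex n m v ->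
  is_path n m v s -> (forall st, st \in s -> st.1 = Lsh) ->
  (forall s', is_path n m v s' -> (forall st, st \in s' -> st != (Rsh, m)) ->
     (size s <= size s')%N) ->
  suffix_sums_ge0 m v ->
  forall u, step_applied_to n m v s (Lsh, m) u -> nth 0 u m.+1 != 0.
Proof.
move=> hn hv hp hL hmin hge u hu; apply/negP => /eqP hz.
have [t [ht htL hts]] := path_of_potential (fun w _ => @suffix_potential_ge0 m w)
  (fun w => @Lsh_descent n m w hn) hv hge.
have hst : (size s <= size t)%N.
  by apply: hmin => // -[d i] /htL /= ->.
have [hvu _] := step_applied_toP hp hu.
have step_bound w st : vertex n m w -> st \in s ->
    suffix_potential m w - 1 <= suffix_potential m (apply_step n m st w).
  case: st => d i hw hst'; have /= -> := hL _ hst'.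
  rewrite suffix_potential_Lsh ?(path_step_le hp hst') //.
  by case: ifP; lia.
have wrap_bound : suffix_potential m u - 1 + n%:Z *+ m.+1
                  <= suffix_potential m (apply_step n m (Lsh, m) u).
  by rewrite suffix_potential_Lsh // /Lsh_wraps hz !eqxx.
have := path_potential_bound hp step_bound hu wrap_bound.
by rewrite suffix_potential_zero; lia.
Qed.

Lemma pivot_path_no_Lsh_wrap n m v s p1 : (0 < n)%N -> vertex n m v -> pivot_path n m v s ->
  P_interval m s p1 (m.+1)%:Z -> shifts_in Lsh s p1 (m.+1)%:Z ->
  (forall j : nat, p1 + 1 <= j%:Z <= (m.+1)%:Z -> 0 <= \sum_(j <= i < m.+2) nth 0 v i) ->
  forall u, step_applied_to n m v s (Lsh, m) u -> nth 0 u m.+1 != 0.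
Proof.
move=> hn hv [p [hp hpath hwall hmin]] [hp1 _ _ no_inner] hL hsum u hu.
have hle := path_step_le hpath.
case: hp1 => [p1E | [hp1 p1_wall]]; last first.
  have [a pa] : exists a : nat, p1 = a%:Z by exists `|p1|%N; lia.
  subst p1; apply: (@no_Lsh_wrap_beyond_wall n m v s a hn hpath _ _ _ _ u hu).
  - by move=> st /p1_wall; lia.
  - by move=> st hst hast; apply: hL => //; have := hle _ hst; lia.
  - by lia.
  - by apply: hsum; lia.
subst p1.
have allL st : st \in s -> st.1 = Lsh.
  by move=> hst; apply: hL => //; have := hle _ hst; lia.
have pE : p = (m.+1)%:Z.
  move: hwall; rewrite /is_wall; case: eqP => [-> no_Lsh0 | _]; last first.
    by case: eqP => // _ p_wall; case: (no_inner p) => //; case: p_wall; lia.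
  case: (no_inner 0) => //; split => // -[d i] hst; have /= hd := allL _ hst.
  by have := no_Lsh0 _ hst; rewrite hd; apply: contra => /eqP [->].
apply: (no_Lsh_wrap_on_shortest_left_path hn hv hpath allL _ _ hu).
  by move=> sp hsp no_Rshm; apply: hmin; rewrite // /is_wall pE eqxx.
by move=> j hj; apply: hsum; lia.
Qed.

Definition flip_dir (d : dir) : dir := if d is Lsh then Rsh else Lsh.

Definition reflect_step m (st : step) : step := (flip_dir st.1, (m - st.2)%N).

Lemma reflect_stepK m st : (st.2 <= m)%N -> reflect_step m (reflect_step m st) = st.
Proof. by case: st => -[] i hi; rewrite /reflect_step /= subKn. Qed.

Lemma upd_reflect n m k x c : (k <= m.+1)%N -> upd n m (m.+1 - k) x c = upd n m k x c.
Proof.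
move=> hk; rewrite /upd (_ : (_ == 0%N) || _ = (k == 0%N) || (k == m.+1)) //.
by apply/idP/idP; lia.
Qed.

Lemma rev_apply_step n m st (u : seq int) : size u = m.+2 -> (st.2 <= m)%N ->
  rev (apply_step n m st u) = apply_step n m (reflect_step m st) (rev u).
Proof.
case: st => d i hs /= him; apply: (@eq_from_nth _ 0).
  by rewrite size_rev !size_apply_step.
move=> k; rewrite size_rev size_apply_step => hk.
rewrite nth_rev ?size_apply_step // !nth_apply_step ?nth_rev ?hs //; try lia.
rewrite subSS -upd_reflect; last lia.
rewrite subKn; last lia.
by congr (upd _ _ _ _ _); case: d => /=; do !case: eqP; lia.
Qed.

Lemma walk_rev n m (v : seq int) t : size v = m.+2 -> (forall st, st \in t -> (st.2 <= m)%N) ->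
  walk n m (rev v) (map (reflect_step m) t) = rev (walk n m v t).
Proof.
elim: t v => //= st t IH v hs ht.
rewrite -rev_apply_step ?ht ?mem_head // IH ?size_apply_step // => st' hst'.
by apply: ht; rewrite inE hst' orbT.
Qed.

Lemma vertex_rev n m (u : seq int) : vertex n m u -> vertex n m (rev u).
Proof.
case=> hs h0 hm1 hmid hdv; split; rewrite ?size_rev ?big_rev ?nth_rev ?hs //.
- by rewrite subSS subnn.
- by move=> k hk; rewrite nth_rev hs; [apply: hmid | ]; lia.
Qed.

Lemma reflect_step_le m (s : seq step) st : st \in map (reflect_step m) s -> (st.2 <= m)%N.
Proof. by case/mapP => st' _ ->; apply: leq_subr. Qed.

Lemma is_path_rev n m v s : is_path n m v s -> is_path n m (rev v) (map (reflect_step m) s).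
Proof.
move=> hp; have [hle hvert hend] := hp.
have hs := vertex_size (is_path_vertex hp).
split; first by move=> st /reflect_step_le.
  move=> k; rewrite size_map -map_take => hk; rewrite walk_rev //.
    exact/vertex_rev/hvert.
  by move=> st /mem_take /hle.
by rewrite walk_rev // hend rev_nseq.
Qed.

Lemma inner_wall_reflect m s p : (forall st, st \in s -> (st.2 <= m)%N) ->
  inner_wall m s p -> inner_wall m (map (reflect_step m) s) (m%:Z - p).
Proof.
move=> hle [hp hst]; split; first lia.
move=> _ /mapP[[d i] hs ->] /=; have /= := hst _ hs; have /= := hle _ hs; lia.
Qed.

Lemma is_wall_reflect m s p : (forall st, st \in s -> (st.2 <= m)%N) ->
  -1 <= p <= (m.+1)%:Z -> is_wall m s p -> is_wall m (map (reflect_step m) s) (m%:Z - p).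
Proof.
move=> hle hp; rewrite /is_wall.
have [-> no_Lsh0 | p_neq] := eqVneq p (-1).
  have -> : (m%:Z - -1 == -1) = false by lia.
  have -> : m%:Z - -1 == (m.+1)%:Z by lia.
  move=> _ /mapP[[d i] hst ->]; have /= hi := hle _ hst; have := no_Lsh0 _ hst.
  by case: d {hst} => //; apply: contra => /eqP [hi0]; apply/eqP; congr pair; lia.
have [-> no_Rshm | pm_neq] := eqVneq p (m.+1)%:Z.
  have -> : m%:Z - (m.+1)%:Z == -1 by lia.
  move=> _ /mapP[[d i] hst ->]; have /= hi := hle _ hst; have := no_Rshm _ hst.
  by case: d {hst} => //; apply: contra => /eqP [hi0]; apply/eqP; congr pair; lia.
have -> : (m%:Z - p == -1) = false by lia.
have -> : (m%:Z - p == (m.+1)%:Z) = false by lia.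
exact: inner_wall_reflect.
Qed.

Lemma map_reflect_stepK m (s : seq step) : (forall st, st \in s -> (st.2 <= m)%N) ->
  map (reflect_step m) (map (reflect_step m) s) = s.
Proof. by move=> hle; rewrite -map_comp map_id_in // => st /hle /reflect_stepK. Qed.

Lemma P_interval_reflect m s a b : (forall st, st \in s -> (st.2 <= m)%N) ->
  P_interval m s a b -> P_interval m (map (reflect_step m) s) (m%:Z - b) (m%:Z - a).
Proof.
move=> hle [ha hb hab no_inner]; split; last 2 first.
- by lia.
- move=> q hq /(inner_wall_reflect (@reflect_step_le m s)).
  by rewrite map_reflect_stepK //; apply: no_inner; lia.
- by case: hb => [->|/(inner_wall_reflect hle)]; [left; lia | right].
- by case: ha => [->|/(inner_wall_reflect hle)]; [left; lia | right].
Qed.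

Lemma shifts_in_reflect m d s a b : (forall st, st \in s -> (st.2 <= m)%N) ->
  shifts_in d s a b -> shifts_in (flip_dir d) (map (reflect_step m) s) (m%:Z - b) (m%:Z - a).
Proof.
move=> hle hd _ /mapP[[d' i] hst ->] /= h1 h2; have /= hi := hle _ hst.
have /= -> // := hd _ hst; lia.
Qed.

Lemma pivot_path_reflect n m v s : pivot_path n m v s ->
  pivot_path n m (rev v) (map (reflect_step m) s).
Proof.
move=> [p [hp hpath hwall hmin]]; have hle := path_step_le hpath.
exists (m%:Z - p); split; first lia.
- exact: is_path_rev.
- exact: is_wall_reflect.
move=> s' hs' hw'; rewrite size_map -(size_map (reflect_step m) s').
apply: hmin; first by rewrite -[v]revK; apply: is_path_rev.
rewrite -[p](_ : m%:Z - (m%:Z - p) = p); last by lia.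
by apply: is_wall_reflect hw'; [exact: path_step_le hs' | lia].
Qed.

Lemma step_applied_to_reflect n m v s st (u : seq int) : is_path n m v s ->
  step_applied_to n m v s st u ->
  step_applied_to n m (rev v) (map (reflect_step m) s) (reflect_step m st) (rev u).
Proof.
move=> hp [k [hk hst hu]]; have [hle _ _] := hp.
have hs := vertex_size (is_path_vertex hp).
exists k; split; rewrite ?size_map ?(nth_map (Lsh, 0%N)) ?hst //.
by rewrite -map_take walk_rev // => [|st' /mem_take /hle //]; rewrite hu.
Qed.

Lemma sum_nth_rev (u : seq int) j : (j <= size u)%N ->
  \sum_(j <= i < size u) nth 0 (rev u) i = \sum_(0 <= i < size u - j) nth 0 u i.
Proof.
move=> hj; rewrite -{1}(add0n j) big_addn [RHS]big_nat_rev /=.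
by apply: eq_big_nat => i hi; rewrite nth_rev; [congr nth | ]; lia.
Qed.

Lemma pivot_path_no_Rsh_wrap n m v s p2 : (0 < n)%N -> vertex n m v -> pivot_path n m v s ->
  P_interval m s (-1) p2 -> shifts_in Rsh s (-1) p2 ->
  (forall j : nat, j%:Z <= p2 -> 0 <= \sum_(0 <= i < j.+1) nth 0 v i) ->
  forall u, step_applied_to n m v s (Rsh, 0%N) u -> nth 0 u 0 != 0.
Proof.
move=> hn hv hpiv hI hR hsum u hu.
have [_ [_ hpath _ _]] := hpiv; have hle := path_step_le hpath.
have hs := vertex_size hv; have [hu_vertex _] := step_applied_toP hpath hu.
have hsum' (j : nat) : m%:Z - p2 + 1 <= j%:Z <= m%:Z - -1 ->
    0 <= \sum_(j <= i < m.+2) nth 0 (rev v) i.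
  move=> hj; rewrite -hs sum_nth_rev hs; last lia.
  by have := hsum (m.+1 - j)%N; rewrite -subSn; lia.
have := step_applied_to_reflect hpath hu; rewrite /reflect_step /= subn0 => hu'.
have := pivot_path_no_Lsh_wrap hn (vertex_rev hv) (pivot_path_reflect hpiv).
rewrite (_ : (m.+1)%:Z = m%:Z - -1); last lia.
move/(_ _ (P_interval_reflect hle hI) (shifts_in_reflect hle hR) hsum' _ hu').
by rewrite nth_rev (vertex_size hu_vertex) // subnn.
Qed.

Theorem lemma5p14 (n m : nat) (v : seq int) (s : seq step) (p1 p2 : int) :
  (1 < n)%N -> (1 <= m)%N -> vertex n m v -> pivot_path n m v s ->
  P_interval m s p1 p2 ->
  (* (1) *)
  (p2 = (m.+1)%:Z -> shifts_in Lsh s p1 p2 ->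
   (forall j : nat, p1 + 1 <= j%:Z <= p2 ->
      0 <= \sum_(j <= i < m.+2) nth 0 v i) ->
   forall u : seq int, step_applied_to n m v s (Lsh, m) u ->
     nth 0 u m.+1 != 0) /\
  (* (2) *)
  (p1 = -1 -> shifts_in Rsh s p1 p2 ->
   (forall j : nat, p1 + 1 <= j%:Z <= p2 ->
      0 <= \sum_(0 <= i < j.+1) nth 0 v i) ->
   forall u : seq int, step_applied_to n m v s (Rsh, 0%N) u ->
     nth 0 u 0 != 0).
Proof.
move=> hn _ hv hpiv hI; have hn0 : (0 < n)%N by lia.
split=> [p2E | p1E]; [subst p2 | subst p1].
  exact: pivot_path_no_Lsh_wrap.
move=> hR hsum; apply: (pivot_path_no_Rsh_wrap hn0 hv hpiv hI hR) => j hj.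
by apply: hsum; lia.
Qed.
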